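(* Let $k$ be a field of characteristic different from $2$ and let $\alpha\in k^\times$. There exist positive integers $a,b$ such that $a\langle 1\rangle = b\langle 2,2\alpha\rangle$ in $GW(k)$ if and only if $\alpha$ is a sum of squares in $k^\times$.
   Context: $GW(k)$ is the Grothendieck–Witt ring of $k$, generated as an abelian group by the one-dimensional quadratic forms $\langle a\rangle$, $a\in k^\times/(k^\times)^2$, with $\langle a\rangle+\langle b\rangle=\langle a,b\rangle$ (orthogonal sum) and $\langle a\rangle\langle b\rangle=\langle ab\rangle$. ''$\alpha$ is a sum of squares in $k^\times$'' means $\alpha=x_1^2+\cdots+x_m^2$ for some $m\ge1$ and $x_i\in k^\times$. *)

From mathcomp Require Import all_boot all_order all_algebra.
Set Implicit Arguments. Unset Strict Implicit. Unset Printing Implicit Defensive.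
Import GRing.Theory.
Local Open Scope ring_scope.

Section GW.
Variable k : fieldType.

Definition dform (s : seq k) : 'M[k]_(size s) :=
  \matrix_(i, j) (if i == j then s`_i else 0).

Definition nondeg_sym n (A : 'M[k]_n) : Prop := A^T = A /\ A \in unitmx.

Definition isometric n (A B : 'M[k]_n) : Prop :=
  exists P : 'M[k]_n, P \in unitmx /\ P^T *m A *m P = B.

(* Equality of the classes [A] and [B] in GW(k), the Grothendieck group of
   the monoid (under orthogonal sum) of isometry classes of nondegenerate
   symmetric bilinear forms: [A] = [B] iff A (+) C ~ B (+) C for some
   nondegenerate symmetric C. *)
Definition gw_eq n m (A : 'M[k]_n) (B : 'M[k]_m) : Prop :=
  exists (r : nat) (C : 'M[k]_r), nondeg_sym C /\
    exists e : (n + r = m + r)%N,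
      isometric (castmx (e, e) (block_mx A 0 0 C)) (block_mx B 0 0 C).

End GW.

(* If alpha is not a sum of squares, the elements s1 - alpha s2 with s1, s2
   sums of squares form a cone T that is closed under sums and products and
   does not contain -1, so nonzero elements of T never add up to 0: they play
   the role of the positive elements of an ordering in which alpha < 0.  Since
   C _|_ -C is hyperbolic, a<1> _|_ C _|_ -C is T-positive on a subspace of
   dimension a + r, whereas b<2,2alpha> _|_ C _|_ -C, a pullback of it, is
   T-negative on a subspace of dimension b + r; a Sylvester-type count forces
   b = 0.
   Conversely, if alpha = x_1^2 + ... + x_m^2, iterating the doubling
   P |-> [[y, P], [-P^T, y]] yields P of size n with P^T P = alpha, and then
   R = [[1, P], [1, -P]] satisfies R^T R = 2 (+) 2alpha, i.e. 2n<1> is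
   isometric to n<2,2alpha>. *)

From mathcomp Require Import all_boot all_order all_algebra.
From mathcomp Require Import ring zify.
From mathcomp Require Import fingroup perm.
From Stdlib Require Import Classical.
Set Implicit Arguments. Unset Strict Implicit. Unset Printing Implicit Defensive.
Import GRing.Theory.
Local Open Scope ring_scope.

Section QuadraticForm.
Variable k : fieldType.

Definition qf n (M : 'M[k]_n) (v : 'rV[k]_n) : k := (v *m M *m v^T) 0 0.

Lemma qf_block n1 n2 (A : 'M[k]_n1) (D : 'M[k]_n2) u w :
  qf (block_mx A 0 0 D) (row_mx u w) = qf A u + qf D w.
Proof. by rewrite /qf mul_row_block tr_row_mx mul_row_col !mulmx0 addr0 add0r mxE. Qed.

Lemma qfN n (M : 'M[k]_n) v : qf (- M) v = - qf M v.
Proof. by rewrite /qf mulmxN mulNmx mxE. Qed.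

Lemma qf_vN n (M : 'M[k]_n) v : qf M (- v) = qf M v.
Proof. by rewrite /qf linearN /= mulNmx mulmxN mulNmx opprK. Qed.

Lemma qf0 n (M : 'M[k]_n) : qf M 0 = 0.
Proof. by rewrite /qf !mul0mx mxE. Qed.

Lemma qf_mul_tr n m (M : 'M[k]_n) (Q : 'M[k]_(n, m)) y :
  qf M (y *m Q^T) = qf (Q^T *m M *m Q) y.
Proof. by rewrite /qf trmx_mul trmxK !mulmxA. Qed.

Lemma qf1 n (x : 'rV[k]_n) : qf 1%:M x = \sum_i x 0 i ^+ 2.
Proof. by rewrite /qf mulmx1 mxE; apply: eq_bigr => i _; rewrite mxE. Qed.

Lemma qf_hyperbolic n (C : 'M[k]_n) (x : 'rV[k]_n) : C^T = C -> C \in unitmx ->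
  qf C (x + x *m invmx C) - qf C (x - x *m invmx C) = 4 * qf 1%:M x.
Proof.
move=> Csym Cu; set y := x *m invmx C.
have xCy : x *m C *m y^T = x *m x^T.
  by rewrite /y trmx_mul trmx_inv Csym -mulmxA (mulmxA C) mulmxV // mul1mx.
have yCx : y *m C *m x^T = x *m x^T by rewrite /y -(mulmxA x) mulVmx // mulmx1.
rewrite /qf linearD linearB /= !mulmxDl !mulmxDr !mulNmx !mulmxN xCy yCx mulmx1.
by rewrite !mxE; ring.
Qed.

End QuadraticForm.

Section Inertia.
Variable k : fieldType.
Variable pos : k -> Prop.
Hypothesis pos_add : forall x y, pos x -> pos y -> pos (x + y).
Hypothesis pos0 : ~ pos 0.

Definition pos_on n p (M : 'M[k]_n) (U : 'M[k]_(p, n)) :=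
  forall x : 'rV_p, x != 0 -> pos (qf M (x *m U)).

Lemma pos_on_pullback n m p (M : 'M[k]_n) (Q : 'M[k]_(n, m)) (U : 'M[k]_(p, m)) :
  pos_on (Q^T *m M *m Q) U -> pos_on M (U *m Q^T).
Proof. by move=> hU x /hU; rewrite mulmxA qf_mul_tr. Qed.

Lemma pos_on_opp_dim n p q (M : 'M[k]_n) (U : 'M[k]_(p, n)) (W : 'M[k]_(q, n)) :
  pos_on M U -> pos_on (- M) W -> (p + q <= n)%N.
Proof.
move=> hU hW; rewrite leqNgt; apply/negP => n_lt_pq.
have : ~~ row_free (col_mx U W).
  by rewrite /row_free neq_ltn (leq_ltn_trans (rank_leq_col _)).
rewrite -kermx_eq0 => /rowV0Pn[z /sub_kermxP]; rewrite -[z]hsubmxK.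
move: (lsubmx z) (rsubmx z) => x y; rewrite mul_row_col row_mx_eq0 negb_and.
move=> /eqP; rewrite addr_eq0 => /eqP xU.
have both : x != 0 -> y != 0 -> False.
  move=> /hU; rewrite xU qf_vN => Upos /hW; rewrite qfN => Wneg.
  by apply: pos0; rewrite -(subrr (qf M (y *m W))); apply: pos_add.
case/orP => [x_neq0|y_neq0].
  have [y0|] := eqVneq y 0; last exact: both.
  by move: (hU _ x_neq0); rewrite xU y0 mul0mx oppr0 qf0.
have [x0|x_neq0] := eqVneq x 0; last exact: both.
by move: (hW _ y_neq0); rewrite qfN -qf_vN -xU x0 mul0mx qf0 oppr0.
Qed.

End Inertia.

Section SumsOfSquares.
Variable k : fieldType.

Definition sos (t : k) := exists l : seq k, t = \sum_(y <- l) y ^+ 2.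

Lemma sos_sum I (r : seq I) (P : pred I) (F : I -> k) :
  sos (\sum_(i <- r | P i) F i ^+ 2).
Proof.
elim: r => [|i r [l IHl]]; first by exists [::]; rewrite !big_nil.
rewrite big_cons; case: (P i); last by exists l.
by exists (F i :: l); rewrite big_cons IHl.
Qed.

Lemma sos0 : sos 0.
Proof. by exists [::]; rewrite big_nil. Qed.

Lemma sos_sqr y : sos (y ^+ 2).
Proof. by exists [:: y]; rewrite big_seq1. Qed.

Lemma sosD s t : sos s -> sos t -> sos (s + t).
Proof. by move=> [l1 ->] [l2 ->]; exists (l1 ++ l2); rewrite big_cat. Qed.

Lemma sosM s t : sos s -> sos t -> sos (s * t).
Proof.
move=> [l1 ->] [l2 ->]; exists [seq a * b | a <- l1, b <- l2].
rewrite big_allpairs_dep mulr_suml; apply: eq_bigr => a _.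
by rewrite mulr_sumr; apply: eq_bigr => b _; rewrite exprMn.
Qed.

Lemma sos_nonzero_terms t : t != 0 -> sos t ->
  exists (m : nat) (x : 'I_m.+1 -> k), (forall i, x i != 0) /\ t = \sum_(i < m.+1) x i ^+ 2.
Proof.
move=> t_neq0 [l tl].
have nz : all (fun y => y != 0) [seq y <- l | y != 0] by apply: filter_all.
have {}tl : t = \sum_(y <- [seq y <- l | y != 0]) y ^+ 2.
  rewrite tl big_filter [RHS]big_mkcond; apply: eq_bigr => y _.
  by case: eqP => // ->; rewrite expr0n.
case: [seq y <- l | y != 0] nz tl => [|y0 l0] nz tl.
  by move: t_neq0; rewrite tl big_nil eqxx.
exists (size l0), (fun i => (y0 :: l0)`_i); split; last by rewrite tl (big_nth 0) big_mkord.
by move=> i; apply: (allP nz); rewrite mem_nth.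
Qed.

Lemma sos_N1 (alpha : k) : 2%:R != 0 :> k -> ~ sos alpha -> ~ sos (-1).
Proof.
move=> two_neq0 alpha_nsos sN1; apply: alpha_nsos.
have -> : alpha = ((alpha + 1) / 2%:R) ^+ 2 + (-1) * ((alpha - 1) / 2%:R) ^+ 2 by field.
by apply: sosD; [apply: sos_sqr|apply: sosM => //; apply: sos_sqr].
Qed.

Lemma sumsq_eq0 n (x : 'rV[k]_n) : ~ sos (-1) -> \sum_i x 0 i ^+ 2 = 0 -> x = 0.
Proof.
move=> sN1 sum0; apply/rowP => i; rewrite mxE; apply/eqP/negPn/negP => xi_neq0; apply: sN1.
have -> : -1 = (\sum_(j | j != i) x 0 j ^+ 2) * (x 0 i)^-1 ^+ 2.
  by move/eqP: sum0; rewrite (bigD1 i) //= addrC addr_eq0 => /eqP ->; field.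
by apply: sosM; [apply: sos_sum|apply: sos_sqr].
Qed.

End SumsOfSquares.

Section Cone.
Variable k : fieldType.
Variable alpha : k.

Definition cone (t : k) := exists s1 s2, sos s1 /\ sos s2 /\ t = s1 - alpha * s2.

Lemma sos_cone s : sos s -> cone s.
Proof. by move=> hs; exists s, 0; split; [|split; [apply: sos0|rewrite mulr0 subr0]]. Qed.

Lemma sos_coneN s : sos s -> cone (- (alpha * s)).
Proof. by move=> hs; exists 0, s; split; [apply: sos0|split; [|rewrite sub0r]]. Qed.

Lemma coneD x y : cone x -> cone y -> cone (x + y).
Proof.
move=> [s1 [s2 [h1 [h2 ->]]]] [s3 [s4 [h3 [h4 ->]]]].
by exists (s1 + s3), (s2 + s4); do !split; try apply: sosD; rewrite //; ring.
Qed.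

Lemma coneM x y : cone x -> cone y -> cone (x * y).
Proof.
move=> [s1 [s2 [h1 [h2 ->]]]] [s3 [s4 [h3 [h4 ->]]]].
exists (s1 * s3 + alpha ^+ 2 * (s2 * s4)), (s1 * s4 + s2 * s3).
do !split; [|by do 2?apply: sosD; apply: sosM; rewrite //; apply: sos_sqr|ring].
by apply: sosD; apply: sosM => //; [apply: sos_sqr|apply: sosM].
Qed.

Hypothesis two_neq0 : (2%:R : k) != 0.
Hypothesis alpha_nsos : ~ sos alpha.

Lemma cone_N1 : ~ cone (-1).
Proof.
move=> [s1 [s2 [h1 [h2 eN1]]]].
have [s20|s2_neq0] := eqVneq s2 0.
  by apply: (sos_N1 two_neq0 alpha_nsos); rewrite eN1 s20 mulr0 subr0.
have e : s1 + 1 = alpha * s2 by rewrite -[s1](subrK (alpha * s2)) -eN1; ring.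
apply: alpha_nsos; have -> : alpha = (s1 + 1) * s2 * (s2^-1) ^+ 2 by rewrite e; field.
apply: sosM; last exact: sos_sqr.
by apply: sosM => //; apply: sosD => //; rewrite -(expr1n k 2); apply: sos_sqr.
Qed.

Lemma cone_add_eq0 x y : cone x -> cone y -> x + y = 0 -> x = 0.
Proof.
move=> cx cy /eqP; rewrite addr_eq0 => /eqP xy.
have [//|x_neq0] := eqVneq x 0; exfalso.
apply: cone_N1; have -> : -1 = y * (x * (x^-1) ^+ 2) by rewrite -[y]opprK -xy; field.
by apply: coneM => //; apply: coneM => //; apply: sos_cone; apply: sos_sqr.
Qed.

End Cone.

Section AlternatingForm.
Variable k : fieldType.

Definition alternating (u w : k) b := flatten (nseq b [:: u; w]).

Lemma size_alternating u w b : size (alternating u w b) = b.*2.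
Proof. by elim: b => //= b IHb; rewrite IHb. Qed.

Lemma nth_alternating u w b j :
  (j < b.*2)%N -> (alternating u w b)`_j = if odd j then w else u.
Proof.
elim: b j => [|b IHb] [|[|j]] //=; rewrite doubleS !ltnS => /IHb.
by rewrite negbK.
Qed.

Lemma dform_diag (s : seq k) : dform s = diag_mx (\row_i s`_i).
Proof. by apply/matrixP => i j; rewrite !mxE; case: eqP => _; rewrite ?mulr1n ?mulr0n. Qed.

Definition odd_coords b m : 'M[k]_(b, m) := \matrix_(i, j) ((j : nat) == i.*2.+1)%:R.

Lemma odd_coords_dform u w b :
  odd_coords b _ *m dform (alternating u w b) = w *: odd_coords b _.
Proof.
apply/matrixP => i j; rewrite dform_diag mul_mx_diag !mxE.
have [/[dup] ji ->|] := eqVneq (j : nat) i.*2.+1; last by rewrite mulr0 mul0r.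
by rewrite nth_alternating ?ltn_Sdouble //= odd_double mulr1 mul1r.
Qed.

Lemma odd_coords_tr b m :
  (b.*2 <= m)%N -> odd_coords b m *m (odd_coords b m)^T = 1%:M.
Proof.
move=> le_bm; apply/matrixP => i i'; rewrite !mxE.
have lt_im : (i.*2.+1 < m)%N by apply: leq_trans le_bm; rewrite ltn_Sdouble.
rewrite (bigD1 (Ordinal lt_im)) //= big1 => [|j]; last first.
  by rewrite -val_eqE /= !mxE => /negbTE ->; rewrite mul0r.
by rewrite !mxE eqxx mul1r addr0 eqSS -!muln2 eqn_mul2r /= val_eqE.
Qed.

Lemma qf_dform_alternating u w b (y : 'rV[k]_b) :
  qf (dform (alternating u w b)) (y *m odd_coords b _) = w * qf 1%:M y.
Proof.
rewrite /qf trmx_mul -!mulmxA (mulmxA (odd_coords _ _)) odd_coords_dform -scalemxAl.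
by rewrite (mulmxA (odd_coords _ _)) odd_coords_tr ?size_alternating // -scalemxAr mxE.
Qed.

End AlternatingForm.

Arguments odd_coords {k} b m.

Section Forward.
Variable k : fieldType.
Hypothesis two_neq0 : (2%:R : k) != 0.
Variable alpha : k.
Hypothesis alpha_nsos : ~ sos alpha.

Definition cone_nz (t : k) := t != 0 /\ cone alpha t.

Lemma cone_nzD x y : cone_nz x -> cone_nz y -> cone_nz (x + y).
Proof.
move=> [x_neq0 cx] [_ cy]; split; last exact: coneD.
exact: contra_neq (cone_add_eq0 two_neq0 alpha_nsos cx cy) x_neq0.
Qed.

Lemma cone_nz0 : ~ cone_nz 0.
Proof. by case; rewrite eqxx. Qed.

Section HyperbolicExtension.
Variables (m p r : nat) (C : 'M[k]_r).
Hypotheses (Csym : C^T = C) (Cunit : C \in unitmx).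

Definition hyperbolic_ext (V : 'M[k]_(p, m)) : 'M[k]_(p + r, m + r + r) :=
  col_mx (row_mx (row_mx V 0) 0) (row_mx (row_mx 0 (1%:M + invmx C)) (1%:M - invmx C)).

Lemma qf_hyperbolic_ext (D : 'M[k]_m) V y x :
  qf (block_mx (block_mx D 0 0 C) 0 0 (- C)) (row_mx y x *m hyperbolic_ext V) =
  qf D (y *m V) + 4 * qf 1%:M x.
Proof.
rewrite mul_row_col !mul_mx_row !mulmx0 !add_row_mx !add0r !addr0 !qf_block qfN.
by rewrite mulmxDr mulmxBr mulmx1 -addrA qf_hyperbolic.
Qed.

Lemma pos_on_hyperbolic_ext (D : 'M[k]_m) V :
  (forall y, cone alpha (qf D (y *m V))) -> (forall y, qf D (y *m V) = 0 -> y = 0) ->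
  pos_on cone_nz (block_mx (block_mx D 0 0 C) 0 0 (- C)) (hyperbolic_ext V).
Proof.
move=> coneDV DV_eq0 z z_neq0; rewrite -[z]hsubmxK qf_hyperbolic_ext.
have four_sqr : 4 = 2%:R ^+ 2 :> k by rewrite -natrX.
have cone_x : cone alpha (4 * qf 1%:M (rsubmx z)).
  by apply/sos_cone/sosM; rewrite ?four_sqr ?qf1; [apply: sos_sqr|apply: sos_sum].
split; last exact: coneD.
apply: contra_neq z_neq0 => sum0.
have y0 := DV_eq0 _ (cone_add_eq0 two_neq0 alpha_nsos (coneDV _) cone_x sum0).
move: sum0; rewrite y0 mul0mx qf0 add0r four_sqr => /eqP.
rewrite mulf_eq0 expf_eq0 (negbTE two_neq0) /= qf1 => /eqP.
move/(sumsq_eq0 (sos_N1 two_neq0 alpha_nsos)) => x0.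
by rewrite -[z]hsubmxK y0 x0 row_mx0.
Qed.

End HyperbolicExtension.

Lemma unit_pullback_alternating_eq0 n r b (C : 'M[k]_r)
    (Q : 'M[k]_(n + r, size (alternating 2%:R (2%:R * alpha) b) + r)) :
  C^T = C -> C \in unitmx ->
  Q^T *m block_mx 1%:M 0 0 C *m Q =
    block_mx (dform (alternating 2%:R (2%:R * alpha) b)) 0 0 C ->
  b = 0.
Proof.
move=> Csym Cunit hQ; set L := alternating _ _ b in Q hQ *.
have sN1 := sos_N1 two_neq0 alpha_nsos.
have alpha_neq0 : alpha != 0 by apply: contra_not_neq alpha_nsos => ->; apply: sos0.
have NCsym : (- C)^T = - C by rewrite linearN /= Csym.
have NCunit : - C \in unitmx by rewrite -scaleN1r unitmxZ ?unitrN1.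
pose X := block_mx (block_mx (1%:M : 'M_n) 0 0 C) 0 0 (- C).
have Xpos : pos_on cone_nz X (hyperbolic_ext C 1%:M).
  apply: pos_on_hyperbolic_ext => // y; rewrite mulmx1 qf1; last exact: sumsq_eq0.
  by apply/sos_cone/sos_sum.
pose Qe := block_mx Q 0 0 (1%:M : 'M_r).
have XQ : Qe^T *m - X *m Qe = block_mx (block_mx (- dform L) 0 0 (- C)) 0 0 (- - C).
  rewrite mulmxN mulNmx tr_block_mx !trmx0 trmx1 !mulmx_block.
  by rewrite !mulmx0 !mul0mx !mulmx1 !mul1mx !addr0 !add0r hQ mul0mx !opp_block_mx !oppr0.
have Xneg : pos_on cone_nz (- X) (hyperbolic_ext (- C) (odd_coords b (size L)) *m Qe^T).
  apply: pos_on_pullback; rewrite XQ; apply: pos_on_hyperbolic_ext => // y.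
    rewrite qfN qf_dform_alternating -mulrA mulrCA; apply: sos_coneN.
    by rewrite mulr_natl mulr2n qf1; apply: sosD; apply: sos_sum.
  rewrite qfN qf_dform_alternating => /eqP; rewrite oppr_eq0 !mulf_eq0.
  by rewrite (negbTE two_neq0) (negbTE alpha_neq0) /= qf1 => /eqP /sumsq_eq0; apply.
by have := pos_on_opp_dim cone_nzD cone_nz0 Xpos Xneg; lia.
Qed.

End Forward.

Section Similitude.
Variable k : fieldType.

Definition similitude n (P : 'M[k]_n) (s : k) := P^T *m P = s%:M /\ P *m P^T = s%:M.

Lemma similitude_double n (P : 'M[k]_n) y s :
  similitude P s -> similitude (block_mx y%:M P (- P^T) y%:M) (y ^+ 2 + s).
Proof.
move=> [PtP PPt]; rewrite /similitude tr_block_mx !tr_scalar_mx linearN /= trmxK.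
rewrite !mulmx_block !mulmxN !mulNmx opprK PtP PPt !mul_mx_scalar !mul_scalar_mx.
by rewrite !scale_scalar_mx !subrr !addNr opprK -expr2 [s%:M + _]addrC -raddfD -scalar_mx_block.
Qed.

Lemma similitude_sumsq I (r : seq I) (F : I -> k) :
  exists n, (0 < n)%N /\ exists P : 'M[k]_n, similitude P (\sum_(i <- r) F i ^+ 2).
Proof.
elim: r => [|i r [n [n_gt0 [P simP]]]].
  by exists 1%N; split => //; exists 0; rewrite big_nil /similitude trmx0 mul0mx raddf0.
exists (n + n)%N; split; first by rewrite addn_gt0 n_gt0.
by exists (block_mx (F i)%:M P (- P^T) (F i)%:M); rewrite big_cons; apply: similitude_double.
Qed.

End Similitude.

Section Interleave.
Variable n : nat.

Lemma half_lt (j : 'I_(n + n)) : (j./2 < n)%N.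
Proof. by rewrite ltn_half_double -addnn. Qed.

Definition interleave_fun (j : 'I_(n + n)) : 'I_(n + n) :=
  if odd j then rshift n (Ordinal (half_lt j)) else lshift n (Ordinal (half_lt j)).

Lemma interleave_inj : injective interleave_fun.
Proof.
move=> j1 j2; rewrite /interleave_fun.
have lr i i' : lshift n i <> rshift n i' by move/eqP; rewrite eq_lrshift.
case: ifP => o1; case: ifP => o2 => e;
  [move/rshift_inj: e | case: (lr _ _ (esym e)) | case: (lr _ _ e) | move/lshift_inj: e];
  case=> h12; apply: val_inj.
all: by rewrite -[val j1]odd_double_half -[val j2]odd_double_half o1 o2 h12.
Qed.

Definition interleave : 'S_(n + n) := perm interleave_inj.

Lemma col_perm_interleave (k : fieldType) (u w : k) :
  col_perm interleave (row_mx (const_mx u) (const_mx w)) =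
  \row_(j < n + n) (if odd j then w else u).
Proof.
apply/rowP => j; rewrite [LHS]mxE [RHS]mxE permE /interleave_fun.
by case: ifP => _; rewrite ?row_mxEr ?row_mxEl mxE.
Qed.

End Interleave.

Section Isometry.
Variable k : fieldType.

Lemma isometric_trans n (A B C : 'M[k]_n) : isometric A B -> isometric B C -> isometric A C.
Proof.
move=> [P [Pu PAP]] [Q [Qu QBQ]]; exists (P *m Q); split; first by rewrite unitmx_mul Pu.
by rewrite trmx_mul -QBQ -PAP !mulmxA.
Qed.

Lemma isometric_diag_perm n (d : 'rV[k]_n) (s : 'S_n) :
  isometric (diag_mx d) (diag_mx (col_perm s d)).
Proof.
exists (perm_mx s^-1); split; first exact: unitmx_perm.
rewrite tr_perm_mx invgK -row_permE -col_permE; apply/matrixP => i j.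
by rewrite !mxE (inj_eq perm_inj).
Qed.

Lemma isometric_unit_block n (P : 'M[k]_n) (a : k) :
  2%:R != 0 :> k -> a != 0 -> P^T *m P = a%:M ->
  isometric 1%:M (block_mx (2%:R%:M : 'M_n) 0 0 ((2%:R * a)%:M : 'M_n)).
Proof.
move=> two_neq0 a_neq0 PtP; pose R := block_mx 1%:M P 1%:M (- P).
have RtR : R^T *m R = block_mx (2%:R%:M : 'M_n) 0 0 ((2%:R * a)%:M : 'M_n).
  rewrite tr_block_mx trmx1 linearN /= mulmx_block !mul1mx !mulmx1 mulmxN mulNmx opprK PtP.
  by rewrite subrr addrN -!raddfD /= mulr2n mulrDl !mul1r.
exists R; split; last by rewrite mulmx1.
have : R^T *m R \in unitmx.
  by rewrite RtR unitmxE det_ublock !det_scalar unitfE mulf_neq0 ?expf_neq0 ?mulf_neq0.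
by rewrite unitmx_mul => /andP[].
Qed.

Lemma isometric_unit_interleaved n (P : 'M[k]_n) (a : k) :
  2%:R != 0 :> k -> a != 0 -> P^T *m P = a%:M ->
  isometric 1%:M (diag_mx (\row_(j < n + n) (if odd j then 2%:R * a else 2%:R))).
Proof.
move=> two_neq0 a_neq0 PtP; rewrite -col_perm_interleave.
apply: isometric_trans (isometric_diag_perm _ _).
by rewrite diag_mx_row !diag_const_mx; apply: isometric_unit_block PtP.
Qed.

End Isometry.

Section GrothendieckWitt.
Variable k : fieldType.

Lemma dform_nseq1 a : dform (nseq a (1 : k)) = 1%:M.
Proof.
apply/matrixP => i j; have ia : (i < a)%N by rewrite -{2}(size_nseq a (1 : k)).
by rewrite !mxE nth_nseq ia; case: eqP.
Qed.

Lemma castmx_dform (s : seq k) m (e : size s = m) :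
  castmx (e, e) (dform s) = diag_mx (\row_(i < m) s`_i).
Proof.
apply/matrixP => i j; rewrite castmxE !mxE (inj_eq (@cast_ord_inj _ _ _)).
by case: eqVneq => [->|_]; rewrite ?mulr1n ?mulr0n.
Qed.

Lemma castmx_congruence n m p (e : n = m) (X : 'M[k]_n) (P : 'M[k]_(m, p)) :
  P^T *m castmx (e, e) X *m P =
  (castmx (esym e, erefl) P)^T *m X *m castmx (esym e, erefl) P.
Proof. by case: m / e P => P; rewrite !castmx_id. Qed.

Lemma gw_eq_of_isometric na nb N (ea : na = N) (eb : nb = N)
    (A : 'M[k]_na) (B : 'M[k]_nb) :
  isometric (castmx (ea, ea) A) (castmx (eb, eb) B) -> gw_eq A B.
Proof.
case: N / ea eb => eb; case: na / eb A => A; rewrite !castmx_id => -[P [Pu PAP]].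
exists 0%N, 1%:M; split; first by split; [rewrite trmx1|apply: unitmx1].
exists erefl; rewrite castmx_id; exists (block_mx P 0 0 1%:M); split.
  by rewrite unitmxE det_ublock det1 mulr1 -unitmxE.
rewrite tr_block_mx !trmx0 trmx1 !mulmx_block.
by rewrite !mulmx0 !mul0mx !mulmx1 !addr0 !add0r mul0mx PAP.
Qed.

End GrothendieckWitt.

Theorem lemma2p4 (k : fieldType) (two_neq0 : (2%:R : k) != 0)
  (alpha : k) (alpha_neq0 : alpha != 0) :
  (exists a b : nat, (0 < a)%N /\ (0 < b)%N /\
     gw_eq (dform (nseq a (1 : k)))
           (dform (flatten (nseq b [:: 2%:R; 2%:R * alpha]))))
  <->
  (exists (m : nat) (x : 'I_m.+1 -> k),
     (forall i, x i != 0) /\ alpha = \sum_(i < m.+1) x i ^+ 2).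
Proof.
split=> [[a [b [_ [b_gt0 [r [C [[Csym Cunit] [e [P [_ hP]]]]]]]]]]|[m [x [_ alpha_sum]]]].
  apply: sos_nonzero_terms alpha_neq0 _; apply: NNPP => alpha_nsos.
  rewrite castmx_congruence dform_nseq1 in hP.
  by move: b_gt0; rewrite (unit_pullback_alternating_eq0 two_neq0 alpha_nsos Csym Cunit hP).
have [n [n_gt0 [P [PtP _]]]] := similitude_sumsq (index_enum 'I_m.+1) x.
have {}PtP : P^T *m P = alpha%:M by rewrite alpha_sum.
exists (n + n)%N, n; split; first by rewrite addn_gt0 n_gt0.
split=> //; set L := flatten _.
have ea : size (nseq (n + n) (1 : k)) = (n + n)%N by rewrite size_nseq.
have eb : size L = (n + n)%N by rewrite size_alternating addnn.
apply: (gw_eq_of_isometric (ea := ea) (eb := eb)); rewrite !castmx_dform.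
have -> : \row_(i < n + n) (nseq (n + n) (1 : k))`_i = const_mx 1.
  by apply/rowP => i; rewrite !mxE nth_nseq ltn_ord.
have -> : \row_(i < n + n) L`_i = \row_(j < n + n) (if odd j then 2%:R * alpha else 2%:R).
  by apply/rowP => i; rewrite !mxE nth_alternating // -addnn.
by rewrite diag_const_mx; apply: isometric_unit_interleaved PtP.
Qed.
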